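(* Let $\tau$ be a substitution over a finite alphabet $A$. Then $\overline\tau$ induces a well-defined map on the Besicovitch space (i.e. $\mathfrak d_H(x,y)=0$ implies $\mathfrak d_H(\overline\tau(x),\overline\tau(y))=0$ for all $x,y\in A^{\mathbb N}$) if and only if $\overline\tau$ is $1$-Lipschitz with respect to $\mathfrak d_H$, i.e. $\mathfrak d_H(\overline\tau(x),\overline\tau(y))\le\mathfrak d_H(x,y)$ for all $x,y\in A^{\mathbb N}$.
   Context: A substitution is a nonerasing monoid morphism $\tau:A^*\to A^*$ (so $\tau(a)$ is a nonempty word for each letter $a$), and $\overline\tau:A^{\mathbb N}\to A^{\mathbb N}$ is $\overline\tau(z)=\tau(z_0)\tau(z_1)\tau(z_2)\cdots$. For words $u,v$ of equal length, $d_H(u,v)$ is the number of positions where they differ; the Besicovitch pseudo-metric is $\mathfrak d_H(x,y)=\limsup_{l\to\infty}\frac{d_H(x_{[0,l)},y_{[0,l)})}{l}$, where $x_{[0,l)}=x_0\cdots x_{l-1}$. *)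

From HB Require Import structures.
From mathcomp Require Import all_boot all_order all_algebra.
From mathcomp Require Import all_classical all_reals all_analysis.
Set Implicit Arguments. Unset Strict Implicit. Unset Printing Implicit Defensive.
Import Order.TTheory GRing.Theory Num.Theory.
Local Open Scope ring_scope.

Definition substitution (A : finType) (tau : A -> seq A) : Prop :=
  forall a : A, (0 < size (tau a))%N.

(* tau-bar(z) = tau(z_0) tau(z_1) ... ; position n lies inside the first n+1
   blocks (each block nonempty), default letter is irrelevant then. *)
Definition subst_seq (A : finType) (tau : A -> seq A) (z : nat -> A) : nat -> A :=
  fun n => nth (z 0%N) (flatten [seq tau (z i) | i <- iota 0 n.+1]) n.

Definition hamming_prefix (A : finType) (x y : nat -> A) (l : nat) : nat :=
  count (fun i => x i != y i) (iota 0 l).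

(* Besicovitch pseudo-metric: limsup_{l -> oo} d_H(x_[0,l), y_[0,l)) / l,
   (index l = n.+1 to avoid l = 0), as an extended real. *)
Definition besicovitch (R : realType) (A : finType) (x y : nat -> A) : \bar R :=
  limn_esup (fun n : nat => ((hamming_prefix x y n.+1)%:R / (n.+1)%:R : R)%:E).

From HB Require Import structures.
From mathcomp Require Import all_boot all_order all_algebra.
From mathcomp Require Import all_classical all_reals all_analysis.
From mathcomp Require Import zify ring.
Import Order.TTheory GRing.Theory Num.Theory.
Set Implicit Arguments. Unset Strict Implicit. Unset Printing Implicit Defensive.

(* If every letter has an image of the same length k, the images of x and y
   can only differ in the blocks of positions [i k, (i + 1) k) with x_i <> y_i,
   so the mismatch densities compare directly and the map is 1-Lipschitz.
   Otherwise pick letters a, b with |tau a| < |tau b| and let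
   d = |tau b| - |tau a|. For a periodic z, the sequences a z and b z are at
   distance 0, hence so are tau(a) tau(z) and tau(b) tau(z). As tau(z) is
   periodic, a single position n with tau(z)(n + d) <> tau(z)(n) would recur
   periodically and give these two images a positive distance: so tau(z) is
   d-periodic. Applied to the constant sequences and to (c^d e^d)^omega this
   gives tau(c^omega) = tau(e^omega) for all letters c, e, and then, block by
   block, the image of every sequence is tau(a^omega). A constant map is
   1-Lipschitz. The converse implication holds since the distance is >= 0. *)

Definition periodic (T : Type) (w : nat -> T) (p : nat) := forall n, w (n + p) = w n.

Lemma periodicM (T : Type) (w : nat -> T) p j : periodic w p -> periodic w (j * p).
Proof. by move=> wp n; elim: j => [|j IH]; rewrite ?addn0 // mulSnr addnA wp. Qed.

Lemma eq_periodic (T : Type) (u v : nat -> T) p : 0 < p -> periodic u p -> periodic v p ->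
  (forall n, n < p -> u n = v n) -> u =1 v.
Proof.
move=> p_gt0 up vp uv n; rewrite (divn_eq n p) addnC.
by rewrite (periodicM _ up) (periodicM _ vp) uv ?ltn_pmod.
Qed.

Section SubstitutionWords.
Variables (A : finType) (tau : A -> seq A).
Implicit Types z : nat -> A.

Definition subst_prefix z m := flatten [seq tau (z i) | i <- iota 0 m].

Lemma subst_prefixD z m k :
  subst_prefix z (m + k) = subst_prefix z m ++ subst_prefix (fun i => z (m + i)) k.
Proof.
rewrite /subst_prefix iotaD map_cat flatten_cat add0n.
by rewrite -[m in iota m k]addn0 iotaDl -map_comp.
Qed.

Lemma subst_prefixS z m : subst_prefix z m.+1 = subst_prefix z m ++ tau (z m).
Proof. by rewrite -addn1 subst_prefixD /subst_prefix /= cats0 addn0. Qed.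

Lemma size_subst_prefix_const z m k : (forall i, i < m -> size (tau (z i)) = k) ->
  size (subst_prefix z m) = m * k.
Proof.
elim: m => [//|m IH] size_k; rewrite subst_prefixS size_cat IH ?size_k ?mulSnr // => i im.
by apply: size_k; apply: ltnW.
Qed.

Lemma eq_subst_prefix z z' m : (forall i, i < m -> z i = z' i) ->
  subst_prefix z m = subst_prefix z' m.
Proof.
move=> zz'; congr flatten; apply/eq_in_map => i.
by rewrite mem_iota => /andP[_ /zz' ->].
Qed.

Hypothesis Htau : substitution tau.

Lemma size_subst_prefix_geq z m : m <= size (subst_prefix z m).
Proof.
by elim: m => [//|m IH]; rewrite subst_prefixS size_cat -addn1 leq_add.
Qed.

Lemma subst_seq_prefix z m n d : n < size (subst_prefix z m) ->
  subst_seq tau z n = nth d (subst_prefix z m) n.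
Proof.
move=> nm; rewrite /subst_seq -/(subst_prefix z n.+1).
have nn : n < size (subst_prefix z n.+1) by apply: leq_trans (size_subst_prefix_geq _ _).
rewrite (set_nth_default d _ nn).
have [m_le|n_lt] := leqP m n.+1.
  by rewrite -(subnKC m_le) subst_prefixD nth_cat nm.
by rewrite -(subnKC (ltnW n_lt)) subst_prefixD nth_cat nn.
Qed.

Lemma subst_seq_shift z m n :
  subst_seq tau z (size (subst_prefix z m) + n) = subst_seq tau (fun i => z (m + i)) n.
Proof.
have nn : n < size (subst_prefix (fun i => z (m + i)) n.+1).
  exact: leq_trans (size_subst_prefix_geq _ _).
rewrite (subst_seq_prefix (z 0) nn) (@subst_seq_prefix _ (m + n.+1) _ (z 0)).
  by rewrite subst_prefixD nth_cat ltnNge leq_addr /= addKn.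
by rewrite subst_prefixD size_cat ltn_add2l.
Qed.

Lemma subst_seq_eq_prefix z z' m n : (forall i, i < m -> z i = z' i) ->
  n < size (subst_prefix z m) -> subst_seq tau z n = subst_seq tau z' n.
Proof.
move=> zz' nm; rewrite (subst_seq_prefix (z 0) nm).
by rewrite (eq_subst_prefix zz') in nm *; rewrite (subst_seq_prefix (z 0) nm).
Qed.

Lemma subst_seq_periodic z p : periodic z p ->
  periodic (subst_seq tau z) (size (subst_prefix z p)).
Proof.
move=> zp n; rewrite addnC subst_seq_shift.
by congr (subst_seq _ _ _); apply/funext => i; rewrite addnC zp.
Qed.

End SubstitutionWords.

Section HammingPrefix.
Variable A : finType.
Implicit Types x y : nat -> A.

Lemma hamming_prefixD x y l k : hamming_prefix x y (l + k) =
  hamming_prefix x y l + count (fun i => x i != y i) (iota l k).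
Proof. by rewrite /hamming_prefix iotaD count_cat. Qed.

Lemma hamming_prefixS x y l :
  hamming_prefix x y l.+1 = hamming_prefix x y l + (x l != y l).
Proof. by rewrite -addn1 hamming_prefixD /= addn0. Qed.

Lemma hamming_prefix_homo x y : {homo hamming_prefix x y : l l' / l <= l'}.
Proof. by move=> l l' ll'; rewrite -(subnKC ll') hamming_prefixD leq_addr. Qed.

Lemma hamming_prefix_leq x y l : hamming_prefix x y l <= l.
Proof. by rewrite -[leqRHS](size_iota 0) count_size. Qed.

Lemma hamming_prefixxx x l : hamming_prefix x x l = 0.
Proof.
by rewrite /hamming_prefix (eq_count (a2 := pred0)) ?count_pred0 // => i /=; rewrite eqxx.
Qed.

Lemma hamming_prefix_progression x y t0 P : 0 < P ->
  (forall j, x (t0 + j * P) != y (t0 + j * P)) ->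
  forall j, j < hamming_prefix x y (t0 + j * P).+1.
Proof.
move=> P0 xy; elim=> [|j IH]; first by rewrite hamming_prefixS xy addn1.
rewrite hamming_prefixS xy addn1 ltnS (leq_trans IH) // hamming_prefix_homo //.
by rewrite mulSn; lia.
Qed.

End HammingPrefix.

Section LimnEsup.
Variable R : realType.
Local Open Scope classical_set_scope.
Local Open Scope ereal_scope.
Implicit Types u : (\bar R)^nat.

Lemma limn_esup_infE u : limn_esup u = ereal_inf (range (esups u)).
Proof. by rewrite limn_esup_lim; apply/cvg_lim => //; exact: cvg_esups_inf. Qed.

Lemma limn_esup_ge u c : (forall N, exists2 m, (N <= m)%N & c <= u m) ->
  c <= limn_esup u.
Proof.
move=> uc; rewrite limn_esup_infE; apply: le_ereal_inf_tmp => _ [N _ <-].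
have [m Nm cm] := uc N; by apply: le_ereal_sup_tmp; exists (u m) => //; exists m.
Qed.

Lemma limn_esup_lt u b : limn_esup u < b -> \forall m \near \oo, u m < b.
Proof.
rewrite limn_esup_infE => /ereal_inf_lt [_ [N _ <-]] ub; exists N => // m Nm.
by apply: le_lt_trans ub; apply: ereal_sup_ubound; exists m.
Qed.

Lemma limn_esup_le u l :
  (forall e : R, (0 < e)%R -> \forall m \near \oo, u m <= l + e%:E) ->
  limn_esup u <= l.
Proof.
move=> ule; apply/lee_addgt0Pr => e e0; have [N _ uN] := ule e e0.
rewrite limn_esup_infE; apply: le_trans (ereal_inf_lbound _) _; first by exists N.
by apply: ge_ereal_sup => _ [m /= Nm <-]; exact: uN.
Qed.

Lemma limn_esup_le_comp (u v w : R^nat) (g : nat -> nat) :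
  g @ \oo --> \oo -> w @ \oo --> 0%R ->
  (\forall m \near \oo, u m <= v (g m) + w m)%R ->
  limn_esup (EFin \o u) <= limn_esup (EFin \o v).
Proof.
move=> g_oo w0 uvw.
suff ul (l : R) : limn_esup (EFin \o v) < l%:E -> limn_esup (EFin \o u) <= l%:E.
  case lv: (limn_esup (EFin \o v)) => [l| |]; rewrite ?leey //.
    apply/lee_addgt0Pr => e e0; apply: ul; by rewrite lv lte_fin ltrDl.
  by rewrite (eq_ninfty (x := limn_esup _)) // => l; apply: ul; rewrite lv ltNyr.
move=> /limn_esup_lt vl; apply: limn_esup_le => e e0.
have vgl : \forall m \near \oo, (v (g m) < l)%R := g_oo _ vl.
have we : \forall m \near \oo, (w m <= e)%R.
  move/cvgr_dist_le : w0 => /(_ e e0); apply: filterS => m.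
  by rewrite sub0r normrN => /(le_trans (ler_norm _)).
near=> m; rewrite /= -EFinD lee_fin.
apply: (le_trans (y := v (g m) + w m)%R); first by near: m.
by apply: lerD; [apply/ltW; near: m | near: m].
Unshelve. all: by end_near. Qed.

End LimnEsup.

Definition scons (T : Type) (c : T) (z : nat -> T) : nat -> T :=
  fun n => if n is n'.+1 then z n' else c.

Section Besicovitch.
Variables (R : realType) (A : finType).
Local Open Scope classical_set_scope.
Local Open Scope ring_scope.
Implicit Types x y : nat -> A.

Lemma besicovitch_ge0 x y : (0 <= besicovitch R x y)%E.
Proof. by apply: limn_esup_ge => N; exists N => //; rewrite lee_fin divr_ge0. Qed.

Lemma besicovitch_eq0 x y C : (forall l, hamming_prefix x y l <= C)%N ->
  besicovitch R x y = 0%E.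
Proof.
move=> xyC; apply/eqP; rewrite eq_le besicovitch_ge0 andbT.
apply: limn_esup_le => e e0; exists (Num.truncn (C%:R / e)) => // n Cn.
rewrite /= add0e lee_fin ler_pdivrMr ?ltr0n // (le_trans (y := C%:R)) ?ler_nat //.
rewrite -ler_pdivrMl // mulrC; apply/ltW/(lt_le_trans (truncnS_gt _)).
by rewrite ler_nat.
Qed.

Lemma besicovitchxx x : besicovitch R x x = 0%E.
Proof. by apply: (@besicovitch_eq0 _ _ 0) => l; rewrite hamming_prefixxx. Qed.

Lemma besicovitch_gt0 x y t0 P : (0 < P)%N ->
  (forall j, x (t0 + j * P)%N != y (t0 + j * P)%N) -> (0 < besicovitch R x y)%E.
Proof.
move=> P0 xy; apply: (@lt_le_trans _ _ ((t0 + P).+1%:R^-1 : R)%:E).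
  by rewrite lte_fin invr_gt0 ltr0n.
apply: limn_esup_ge => N; exists (t0 + N * P)%N.
  by rewrite (leq_trans (leq_pmulr N P0)) ?leq_addl.
rewrite lee_fin ler_pdivlMr ?ltr0n // mulrC ler_pdivrMr ?ltr0n // -natrM ler_nat.
have := hamming_prefix_progression P0 xy N; nia.
Qed.

Lemma besicovitch_scons c c' (z : nat -> A) :
  besicovitch R (scons c z) (scons c' z) = 0%E.
Proof.
apply: (@besicovitch_eq0 _ _ 1) => -[//|l]; rewrite -add1n hamming_prefixD.
rewrite (eq_in_count (a2 := pred0)) ?count_pred0 ?addn0 ?hamming_prefix_leq // => -[|i].
  by rewrite mem_iota.
by rewrite /= eqxx.
Qed.

End Besicovitch.

Section ConstantSize.
Variables (R : realType) (A : finType) (tau : A -> seq A) (k : nat).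
Hypothesis tau_k : forall a, size (tau a) = k.
Hypothesis k_gt0 : (0 < k)%N.
Local Open Scope classical_set_scope.
Local Open Scope ring_scope.
Implicit Types x y : nat -> A.

Let tau_subst : substitution tau.
Proof. by move=> a; rewrite tau_k. Qed.

Let size_prefix z m : size (subst_prefix tau z m) = (m * k)%N.
Proof. exact: size_subst_prefix_const. Qed.

Lemma hamming_prefix_subst_const_size x y s :
  (hamming_prefix (subst_seq tau x) (subst_seq tau y) (s * k)
     <= hamming_prefix x y s * k)%N.
Proof.
elim: s => [//|s IH]; rewrite mulSnr hamming_prefixD hamming_prefixS mulnDl leq_add //.
have [xy_s|_] := eqVneq (x s) (y s); last first.
  by rewrite mul1n -[leqRHS](size_iota (s * k)) count_size.
rewrite mul0n leqn0 -(count_pred0 (iota (s * k) k)); apply/eqP/eq_in_count => i.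
rewrite mem_iota => /andP[ski iks] /=; apply/negbTE/negPn/eqP.
have jk : (i - s * k < k)%N by rewrite ltn_subLR.
rewrite -(subnKC ski); move: (i - s * k)%N jk => j jk.
rewrite -{1}(size_prefix x s) -(size_prefix y s) !subst_seq_shift //.
apply: (@subst_seq_eq_prefix _ _ tau_subst _ _ 1) => [[|//]|]; first by rewrite !addn0.
by rewrite size_prefix mul1n.
Qed.

Lemma hamming_prefix_subst_const_size_div x y m :
  (hamming_prefix (subst_seq tau x) (subst_seq tau y) m
     <= (hamming_prefix x y (m %/ k)).+1 * k)%N.
Proof.
apply: leq_trans (hamming_prefix_homo _ _ (ltnW (ltn_ceil m k_gt0))) _.
apply: leq_trans (hamming_prefix_subst_const_size _ _ _) _.
by rewrite leq_mul2r hamming_prefixS -addn1 leq_add2l leq_b1 orbT.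
Qed.

Lemma besicovitch_subst_const_size_le x y :
  (besicovitch R (subst_seq tau x) (subst_seq tau y) <= besicovitch R x y)%E.
Proof.
pose h (x y : nat -> A) n := (hamming_prefix x y n.+1)%:R / n.+1%:R : R.
apply: (@limn_esup_le_comp _ (h _ _) (h x y) (fun m => harmonic m *+ k)
  (fun m => (m.+1 %/ k).-1)).
- move=> P [N _ PN]; exists (N.+1 * k)%N => // m /= Nm; apply: PN => /=.
  by rewrite -ltnS prednK ?leq_divRL ?divn_gt0 //; lia.
- by rewrite -(mul0rn _ k); apply: cvgMn; exact: cvg_harmonic.
exists k => // m km; rewrite /h /=.
set r := (m.+1 %/ k)%N.
have r_gt0 : (0 < r)%N by rewrite divn_gt0 // ltnW.
rewrite prednK // /harmonic /= -[_ *+ k]mulr_natl.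
set b := hamming_prefix _ _ m.+1; set a := hamming_prefix x y r.
have b_le : (b * r <= a * m.+1 + k * r)%N.
  have := hamming_prefix_subst_const_size_div x y m.+1; have := leq_divM m.+1 k.
  rewrite -/r -/b -/a; nia.
have r0 : 0 < r%:R :> R by rewrite ltr0n.
have M0 : 0 < m.+1%:R :> R by rewrite ltr0n.
rewrite (_ : a%:R / r%:R + k%:R * m.+1%:R^-1
             = (a * m.+1 + k * r)%:R / (r * m.+1)%:R); last first.
  by rewrite natrD !natrM; field; rewrite !gt_eqF.
rewrite (_ : b%:R / m.+1%:R = (b * r)%:R / (r * m.+1)%:R); last first.
  by rewrite !natrM; field; rewrite !gt_eqF.
by rewrite ler_pM2r ?invr_gt0 ?ltr0n ?muln_gt0 ?r_gt0 // ler_nat.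
Qed.

End ConstantSize.

Section NonConstantSize.
Variables (R : realType) (A : finType) (tau : A -> seq A).
Hypothesis tau_subst : substitution tau.
Hypothesis subst_besicovitch0 : forall x y : nat -> A,
  besicovitch R x y = 0%E -> besicovitch R (subst_seq tau x) (subst_seq tau y) = 0%E.
Variables a b : A.
Hypothesis size_ab : (size (tau a) < size (tau b))%N.
Let d := (size (tau b) - size (tau a))%N.
Let d_gt0 : (0 < d)%N. Proof. by rewrite subn_gt0. Qed.

Let subst_seq_scons c z n :
  subst_seq tau (scons c z) (size (tau c) + n) = subst_seq tau z n.
Proof.
by have := subst_seq_shift tau_subst (scons c z) 1 n; rewrite /subst_prefix /= cats0.
Qed.

(* A defect tau(z)(n0 + d) <> tau(z)(n0) recurs with the period of tau(z) and
   separates tau(b) tau(z) from tau(a) tau(z) on an arithmetic progression. *)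
Lemma subst_seq_periodic_d z p : (0 < p)%N -> periodic z p -> periodic (subst_seq tau z) d.
Proof.
move=> p_gt0 zp n0; apply/eqP; apply: contraT => defect.
set P := size (subst_prefix tau z p).
have P_gt0 : (0 < P)%N by apply: leq_trans (size_subst_prefix_geq tau_subst z p).
have subst_zP := periodicM _ (subst_seq_periodic tau_subst zp).
suff : (0 < besicovitch R (subst_seq tau (scons b z)) (subst_seq tau (scons a z)))%E.
  by rewrite subst_besicovitch0 ?besicovitch_scons ?ltxx.
apply: (@besicovitch_gt0 _ _ _ _ (size (tau b) + n0) P P_gt0) => j.
rewrite -addnA subst_seq_scons subst_zP.
have -> : (size (tau b) + (n0 + j * P) = size (tau a) + (n0 + d + j * P))%N.
  by rewrite /d; lia.
by rewrite subst_seq_scons subst_zP eq_sym.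
Qed.

(* For z = (c^d e^d)^omega, tau(z) is d-periodic, begins like tau(c^omega) and,
   after |tau(c^d)| = d |tau c| letters, like tau(e^omega). *)
Lemma eq_subst_seq_cst c e : subst_seq tau (fun _ => c) =1 subst_seq tau (fun _ => e).
Proof.
pose z i := if (i %% d.*2 < d)%N then c else e.
have zd2 : periodic z d.*2 by move=> i; rewrite /z modnDr.
have wd : periodic (subst_seq tau z) d by apply: subst_seq_periodic_d zd2; rewrite double_gt0.
have const_d f : periodic (subst_seq tau (fun _ : nat => f)) d.
  by apply: (@subst_seq_periodic_d _ 1).
have zc i : (i < d)%N -> z i = c.
  by move=> id; rewrite /z modn_small ?id // -addnn ltn_addr.
have ze i : (i < d)%N -> z (d + i) = e.
  by move=> id; rewrite /z modn_small ?ltnNge ?leq_addr // -addnn; lia.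
have dz n : (n < d)%N -> (n < size (subst_prefix tau z d))%N.
  by move=> nd; apply: leq_trans (size_subst_prefix_geq tau_subst _ _).
move=> n; transitivity (subst_seq tau z n).
  apply: (eq_periodic d_gt0 (const_d c) wd) => m md.
  exact/esym/(subst_seq_eq_prefix tau_subst zc (dz _ md)).
apply: (eq_periodic d_gt0 wd (const_d e)) => m md.
have size_zd : size (subst_prefix tau z d) = (size (tau c) * d)%N.
  by rewrite mulnC; apply: size_subst_prefix_const => i /zc ->.
rewrite -(periodicM (size (tau c)) wd m) -size_zd addnC.
rewrite subst_seq_shift //; apply: (subst_seq_eq_prefix tau_subst _ (n := m) (m := d)).
  by move=> i /ze.
by apply: leq_trans (size_subst_prefix_geq tau_subst _ _).
Qed.

Lemma subst_seq_eq_cst z : subst_seq tau z =1 subst_seq tau (fun _ => a).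
Proof.
move=> n; elim/ltn_ind: n z => n IH z; rewrite -(eq_subst_seq_cst (z 0)).
have size1 : size (subst_prefix tau z 1) = size (tau (z 0)) by rewrite /subst_prefix /= cats0.
have [n_lt|n_ge] := ltnP n (size (tau (z 0))).
  by apply: (@subst_seq_eq_prefix _ _ tau_subst _ _ 1) => [[]|]; rewrite ?size1.
set m := (n - size (tau (z 0)))%N.
have m_lt : (m < n)%N by rewrite /m; have := tau_subst (z 0); lia.
have -> : n = (size (subst_prefix tau z 1) + m)%N by rewrite size1 subnKC.
rewrite subst_seq_shift // IH // (eq_subst_seq_cst a (z 0)).
by rewrite (@eq_subst_prefix _ _ z (fun _ => z 0)) ?subst_seq_shift // => -[].
Qed.

Lemma besicovitch_subst_nonconst_size_eq0 x y :
  besicovitch R (subst_seq tau x) (subst_seq tau y) = 0%E.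
Proof.
have -> : subst_seq tau x = subst_seq tau y by apply/funext => n; rewrite !subst_seq_eq_cst.
exact: besicovitchxx.
Qed.

End NonConstantSize.

Local Open Scope ring_scope.
Local Open Scope ereal_scope.

Theorem mainTheorem4 (R : realType) (A : finType) (tau : A -> seq A) :
  substitution tau ->
  ((forall x y : nat -> A, besicovitch R x y = 0 ->
      besicovitch R (subst_seq tau x) (subst_seq tau y) = 0)
   <->
   (forall x y : nat -> A,
      besicovitch R (subst_seq tau x) (subst_seq tau y) <= besicovitch R x y)).
Proof.
move=> tau_subst; split => [subst_besicovitch0 x y|lip x y xy0]; last first.
  by apply/eqP; rewrite eq_le besicovitch_ge0 -xy0 lip.
have [[a [b size_ab]]|same_size] :=
  pselect (exists a b, (size (tau a) < size (tau b))%N).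
  rewrite (besicovitch_subst_nonconst_size_eq0 tau_subst subst_besicovitch0 size_ab).
  exact: besicovitch_ge0.
have size_const c : size (tau c) = size (tau (x 0%N)).
  case: (ltngtP (size (tau c)) (size (tau (x 0%N)))) => // size_lt.
    by case: same_size; exists c, (x 0%N).
  by case: same_size; exists (x 0%N), c.
exact: (besicovitch_subst_const_size_le R size_const (tau_subst _)).
Qed.
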